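(* Let $K\in\mathbb{R}^{m\times n}$ and let $Q=\begin{bmatrix}Q_{11}&Q_{12}\\Q_{12}^\top&Q_{22}\end{bmatrix}\in\mathbb{R}^{(n+m)\times(n+m)}$ be symmetric with $Q_{11}\in\mathbb{R}^{n\times n}$. Define $$Y(x)=\begin{bmatrix}x\\ \mathrm{dz}(Kx)\end{bmatrix}^\top Q\begin{bmatrix}x\\ \mathrm{dz}(Kx)\end{bmatrix},\qquad x\in\mathbb{R}^n,$$ and, for a diagonal $T_0\in\mathbb{R}^{m\times m}$ and a symmetric $R\in\mathbb{R}^{m\times m}$, $$\Sigma_0=\begin{bmatrix}0&K^\top T_0\\ T_0K&-2T_0\end{bmatrix},\qquad \Sigma_R=\begin{bmatrix}K^\top RK&-K^\top R\\ -RK&R\end{bmatrix}.$$ Then: (i) If there exist a diagonal $T_0\succeq 0$ and a symmetric $R\succeq 0$ with $Q-\Sigma_0-\Sigma_R\succeq 0$, then $Y$ is positive semi-definite. (ii) If there exist a diagonal $T_0\succeq0$ and a symmetric $R\succ 0$ with $Q-\Sigma_0-\Sigma_R\succeq 0$, then $Y$ is positive semi-definite and $Y(x)\ge \lambda_{\min}(R)\,|\mathrm{sat}(Kx)|^2$ for all $x\in\mathbb{R}^n$. (iii) If there exists a symmetric $R\succ0$ with $Q_{11}\succ 0$ and $Q-\Sigma_R\succeq 0$, then $Y$ is positive definite (but not necessarily radially unbounded). (iv) If there exists a diagonal $T_0\succ 0$ with $Q_{11}\succ0$ and $Q-\Sigma_0\succeq 0$, then $Y$ is positive definite and radially unbo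unded.
   Context: The saturation $\mathrm{sat}:\mathbb{R}^m\to\mathbb{R}^m$ is decentralized: $\mathrm{sat}(u)_i=\min\{\overline{u}_i,\max\{-\underline{u}_i,u_i\}\}$ for given limits $\overline{u}_i>0$, $\underline{u}_i>0$ (possibly non-symmetric). The deadzone is $\mathrm{dz}(u)=u-\mathrm{sat}(u)$. $\succ0$/$\succeq0$ denote positive definite/semi-definite; $\lambda_{\min}(R)$ is the smallest eigenvalue of $R$. *)

From HB Require Import structures.
From mathcomp Require Import all_boot all_order all_algebra.
From mathcomp Require Import classical_sets reals.
Set Implicit Arguments. Unset Strict Implicit. Unset Printing Implicit Defensive.
Import Order.TTheory GRing.Theory Num.Theory.
Local Open Scope ring_scope.
Local Open Scope classical_set_scope.

Section Defs.
Variable R : realType.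

Definition qform k (A : 'M[R]_k) (x : 'cV[R]_k) : R := (x^T *m A *m x) 0 0.

Definition sym_mx k (A : 'M[R]_k) : Prop := A^T = A.
Definition psd_mx k (A : 'M[R]_k) : Prop := forall x : 'cV[R]_k, 0 <= qform A x.
Definition pd_mx k (A : 'M[R]_k) : Prop :=
  forall x : 'cV[R]_k, x != 0 -> 0 < qform A x.

Definition lambda_min k (A : 'M[R]_k) : R := inf [set a : R | eigenvalue A a].

Definition sqnorm k (v : 'cV[R]_k) : R := \sum_i (v i 0) ^+ 2.
Definition enorm k (v : 'cV[R]_k) : R := Num.sqrt (sqnorm v).

Definition sat m (ub lb : 'I_m -> R) (u : 'cV[R]_m) : 'cV[R]_m :=
  \col_i Num.min (ub i) (Num.max (- lb i) (u i 0)).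
Definition dz m (ub lb : 'I_m -> R) (u : 'cV[R]_m) : 'cV[R]_m := u - sat ub lb u.

Definition Yfun n m (ub lb : 'I_m -> R) (K : 'M[R]_(m, n)) (Q : 'M[R]_(n + m))
  (x : 'cV[R]_n) : R := qform Q (col_mx x (dz ub lb (K *m x))).

Definition Sigma0 n m (K : 'M[R]_(m, n)) (T0 : 'M[R]_m) : 'M[R]_(n + m) :=
  block_mx 0 (K^T *m T0) (T0 *m K) (- (T0 *+ 2)).
Definition SigmaR n m (K : 'M[R]_(m, n)) (Rm : 'M[R]_m) : 'M[R]_(n + m) :=
  block_mx (K^T *m Rm *m K) (- (K^T *m Rm)) (- (Rm *m K)) Rm.

Definition psd_fun n (Y : 'cV[R]_n -> R) : Prop := forall x, 0 <= Y x.
Definition pd_fun n (Y : 'cV[R]_n -> R) : Prop :=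
  Y 0 = 0 /\ forall x, x != 0 -> 0 < Y x.
Definition radially_unbounded n (Y : 'cV[R]_n -> R) : Prop :=
  forall M : R, exists r : R, forall x, r <= enorm x -> M <= Y x.
End Defs.

(* Put z = (x, dz(Kx)) and s = sat(Kx) = Kx - dz(Kx).  Then z' Sigma_R z = s' R s and
   z' Sigma_0 z = 2 sum_i (T0)_ii s_i dz_i, where s_i dz_i >= min(ub_i, lb_i) |dz_i| >= 0
   is the sector property of the deadzone.  Hence
   Y(x) = z' (Q - Sigma_0 - Sigma_R) z + z' Sigma_0 z + s' R s >= s' R s,
   which gives (i) and (ii), lambda_min R being attained on the unit sphere.
   If dz(Kx) = 0 then Y(x) = x' Q11 x; otherwise s' R s > 0 in (iii) and z' Sigma_0 z > 0
   in (iv).  For radial unboundedness, L = z' Sigma_0 z bounds |dz|^2 by a multiple of L^2,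
   while the parallelogram law for the psd form Q - Sigma_0 gives
   Y(x) >= x' Q11 x / 2 - C |dz|^2 + L; so either L or |x| makes Y(x) large.
   With K = R = 1 and Q = Sigma_R, Y(x) = sat(x)^2 stays bounded. *)

From HB Require Import structures.
From mathcomp Require Import all_boot all_order all_algebra.
From mathcomp Require Import classical_sets reals.
From mathcomp Require Import boolp topology normedtype derive.
From mathcomp Require Import ring lra.
Set Implicit Arguments. Unset Strict Implicit. Unset Printing Implicit Defensive.
Import Order.TTheory GRing.Theory Num.Theory.
Import numFieldTopology.Exports numFieldNormedType.Exports.
Local Open Scope ring_scope.

Lemma satr_sector (R : realFieldType) (a b v : R) : 0 < a -> 0 < b ->
  let s := Num.min a (Num.max (- b) v) in
  Num.min a b * `|v - s| <= s * (v - s).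
Proof.
move=> a_gt0 b_gt0; rewrite /= !(maxEle, minEle).
case: (leP a b) => ab; case: (leP (- b) v) => bv.
- case: (leP a v) => av; last by rewrite subrr normr0; lra.
  rewrite ger0_norm; [nra|lra].
- case: (leP a (- b)) => ab'; first lra.
  rewrite ler0_norm; [nra|lra].
- case: (leP a v) => av; last by rewrite subrr normr0; lra.
  rewrite ger0_norm; [nra|lra].
- case: (leP a (- b)) => ab'; first lra.
  rewrite ler0_norm; [nra|lra].
Qed.

Lemma satr_eq0 (R : realFieldType) (a b v : R) : 0 < a -> 0 < b ->
  Num.min a (Num.max (- b) v) = 0 -> v = 0.
Proof.
move=> a_gt0 b_gt0; rewrite !(maxEle, minEle).
by case: (leP (- b) v) => bv; case: leP => ?; lra.
Qed.

Section Deadzone.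
Variables (R : realType) (m : nat) (ub lb : 'I_m -> R).
Hypotheses (ub_gt0 : forall i, 0 < ub i) (lb_gt0 : forall i, 0 < lb i).

Lemma subr_dz u : u - dz ub lb u = sat ub lb u.
Proof. by rewrite /dz opprB addrC subrK. Qed.

Lemma dz_sector u i :
  Num.min (ub i) (lb i) * `|dz ub lb u i 0| <= sat ub lb u i 0 * dz ub lb u i 0.
Proof. by rewrite /dz !mxE; apply: satr_sector. Qed.

Lemma dz_eq0_of_sat_eq0 u : sat ub lb u = 0 -> dz ub lb u = 0.
Proof.
move=> s0; rewrite /dz s0 subr0; apply/matrixP => i j; rewrite (ord1 j) mxE.
by apply: (satr_eq0 (ub_gt0 i) (lb_gt0 i)); move/matrixP: s0 => /(_ i 0); rewrite !mxE.
Qed.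

Lemma dz0 : dz ub lb 0 = 0.
Proof.
apply: dz_eq0_of_sat_eq0; apply/matrixP => i j; rewrite !mxE.
have ub_i := ub_gt0 i; have lb_i := lb_gt0 i.
rewrite (max_idPr _); last by rewrite lerNl oppr0 ltW.
by rewrite (min_idPr _) // ltW.
Qed.

End Deadzone.

Lemma sumr_ge_term (R : numDomainType) (I : finType) (F : I -> R) i :
  (forall j, 0 <= F j) -> F i <= \sum_j F j.
Proof. by move=> F_ge0; rewrite (bigD1 i) //= lerDl sumr_ge0. Qed.

Section QuadraticForms.
Variable R : realType.

Definition bilform k (A : 'M[R]_k) (p q : 'cV[R]_k) : R := (p^T *m A *m q) 0 0.

Lemma qformD k (A B : 'M[R]_k) x : qform (A + B) x = qform A x + qform B x.
Proof. by rewrite /qform mulmxDr mulmxDl mxE. Qed.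

Lemma qformN k (A : 'M[R]_k) x : qform (- A) x = - qform A x.
Proof. by rewrite /qform mulmxN mulNmx mxE. Qed.

Lemma qformB k (A B : 'M[R]_k) x : qform (A - B) x = qform A x - qform B x.
Proof. by rewrite qformD qformN. Qed.

Lemma qform0x k (x : 'cV[R]_k) : qform 0 x = 0.
Proof. by rewrite /qform mulmx0 mul0mx mxE. Qed.

Lemma qformx0 k (A : 'M[R]_k) : qform A 0 = 0.
Proof. by rewrite /qform mulmx0 mxE. Qed.

Lemma qformDZ k (A : 'M[R]_k) p q (t : R) :
  qform A (p + t *: q) =
  qform A p + t * (bilform A p q + bilform A q p) + t ^+ 2 * qform A q.
Proof.
rewrite /qform /bilform [(p + _)^T]linearD /= [(t *: q)^T]linearZ /= !(mulmxDl, mulmxDr).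
by rewrite -!scalemxAl -?scalemxAr -?scalemxAl !mxE; ring.
Qed.

Lemma qformZ k (A : 'M[R]_k) (t : R) x : qform A (t *: x) = t ^+ 2 * qform A x.
Proof.
by rewrite -[t *: x]add0r qformDZ qformx0 /bilform trmx0 !(mul0mx, mulmx0) mxE; ring.
Qed.

Lemma qform_parallelogram k (A : 'M[R]_k) p q :
  qform A (p + q) + qform A (p - q) = 2 * (qform A p + qform A q).
Proof.
have := qformDZ A p q 1; have := qformDZ A p q (-1).
by rewrite scale1r scaleN1r => -> ->; ring.
Qed.

Lemma psd_qformB_le k (A : 'M[R]_k) p q : psd_mx A ->
  qform A (p - q) <= 2 * (qform A p + qform A q).
Proof. by move=> /(_ (p + q)); rewrite -qform_parallelogram; lra. Qed.

Lemma bilformC k (A : 'M[R]_k) p q : sym_mx A -> bilform A p q = bilform A q p.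
Proof.
move=> symA; rewrite /bilform.
have -> : (q^T *m A *m p) 0 0 = (q^T *m A *m p)^T 0 0 by rewrite [RHS]mxE.
by rewrite !trmx_mul trmxK symA mulmxA.
Qed.

Lemma qform_mulmx k l (A : 'M[R]_k) (P P' : 'M[R]_(k, l)) z :
  qform (P^T *m A *m P') z = bilform A (P *m z) (P' *m z).
Proof. by rewrite /qform /bilform trmx_mul !mulmxA. Qed.

Lemma bilform_diag k (T : 'M[R]_k) p q : is_diag_mx T ->
  bilform T p q = \sum_i T i i * p i 0 * q i 0.
Proof.
move=> /is_diag_mxP diagT; rewrite /bilform mxE; apply: eq_bigr => j _.
rewrite mxE (bigD1 j) //= big1 ?addr0 => [|i ij]; first by rewrite mxE; ring.
by rewrite mxE diagT ?mulr0 // eq_sym.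
Qed.

Lemma qform_delta k (A : 'M[R]_k) i : qform A (delta_mx i 0) = A i i.
Proof. by rewrite /qform trmx_delta -colE -rowE !mxE. Qed.

Lemma qform_scalar k (a : R) (x : 'cV[R]_k) : qform a%:M x = a * sqnorm x.
Proof.
rewrite /qform mul_mx_scalar -scalemxAl !mxE /sqnorm; congr (_ * _).
by apply: eq_bigr => i _; rewrite mxE expr2.
Qed.

Lemma sqnormE k (x : 'cV[R]_k) : sqnorm x = qform 1%:M x.
Proof. by rewrite qform_scalar mul1r. Qed.

Lemma qform_col_mx0 n m (Q : 'M[R]_(n + m)) x :
  qform Q (col_mx x 0) = qform (ulsubmx Q) x.
Proof.
rewrite -{1}(submxK Q) /qform tr_col_mx trmx0 mul_row_block mul_row_col.
by rewrite !mul0mx !addr0 mulmx0 addr0.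
Qed.

Lemma pd_mx_psd k (A : 'M[R]_k) : pd_mx A -> psd_mx A.
Proof.
move=> pdA x; have [->|x0] := eqVneq x 0; first by rewrite qformx0.
exact/ltW/pdA.
Qed.

Lemma psd_mx_diag_ge0 k (A : 'M[R]_k) i : psd_mx A -> 0 <= A i i.
Proof. by move=> /(_ (delta_mx i 0)); rewrite qform_delta. Qed.

Lemma pd_mx_diag_gt0 k (A : 'M[R]_k) i : pd_mx A -> 0 < A i i.
Proof.
move=> /(_ (delta_mx i 0)); rewrite qform_delta; apply.
by apply/eqP => /matrixP/(_ i 0); rewrite !mxE !eqxx; apply/eqP; rewrite oner_eq0.
Qed.

Lemma cV_neq0 k (x : 'cV[R]_k) : x != 0 -> exists i, x i 0 != 0.
Proof.
move=> x0; apply/existsP; apply: contraNT x0 => /existsPn x_eq0.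
by apply/eqP/matrixP => i j; rewrite (ord1 j) mxE; apply/eqP/negPn/x_eq0.
Qed.

Lemma sqnorm_ge0 k (x : 'cV[R]_k) : 0 <= sqnorm x.
Proof. by apply: sumr_ge0 => i _; rewrite sqr_ge0. Qed.

Lemma sqnorm0 k : sqnorm (0 : 'cV[R]_k) = 0.
Proof. by rewrite /sqnorm big1 // => i _; rewrite mxE expr0n. Qed.

Lemma sqnorm_gt0 k (x : 'cV[R]_k) : x != 0 -> 0 < sqnorm x.
Proof.
move=> /cV_neq0 [i xi0]; rewrite /sqnorm (bigD1 i) //=.
have xi_sq_gt0 : 0 < x i 0 ^+ 2 by rewrite lt_def sqr_ge0 sqrf_eq0 xi0.
have rest_ge0 : 0 <= \sum_(j | j != i) x j 0 ^+ 2 by apply: sumr_ge0 => j _; exact: sqr_ge0.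
lra.
Qed.

Lemma sqnormZ k (t : R) (x : 'cV[R]_k) : sqnorm (t *: x) = t ^+ 2 * sqnorm x.
Proof. by rewrite /sqnorm mulr_sumr; apply: eq_bigr => i _; rewrite mxE exprMn. Qed.

Lemma sqnorm_col_mx n m (x : 'cV[R]_n) (w : 'cV[R]_m) :
  sqnorm (col_mx x w) = sqnorm x + sqnorm w.
Proof.
by rewrite /sqnorm big_split_ord /=; congr (_ + _); apply: eq_bigr => i _;
  rewrite ?col_mxEu ?col_mxEd.
Qed.

Lemma pd_mx1 k : pd_mx (1%:M : 'M[R]_k).
Proof. by move=> x x_neq0; rewrite -sqnormE sqnorm_gt0. Qed.

End QuadraticForms.

Section QuadraticFormBounds.
Variable R : realType.
Local Open Scope classical_set_scope.

Lemma continuous_qform k (A : 'M[R]_k) : continuous (fun v : 'rV[R]_k => qform A v^T).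
Proof.
have -> : (fun v : 'rV[R]_k => qform A v^T) =
          (fun v => \sum_j (\sum_i v 0 i * A i j) * v 0 j).
  apply: funext => v; rewrite /qform trmxK !mxE; apply: eq_bigr => j _; rewrite !mxE.
  by congr (_ * _); apply: eq_bigr => i _; rewrite !mxE.
apply: continuous_big => [|j _]; first exact: add_continuous.
move=> v; apply: continuousM; last exact: coord_continuous.
apply: continuous_big => [|i _]; first exact: add_continuous.
by move=> u; apply: continuousM; [exact: coord_continuous | exact: cst_continuous].
Qed.

Lemma continuous_sqnorm k : continuous (fun v : 'rV[R]_k => sqnorm v^T).
Proof.
have -> : (fun v : 'rV[R]_k => sqnorm v^T) = (fun v => qform 1%:M v^T).
  by apply: funext => v; rewrite sqnormE.
exact: continuous_qform.
Qed.

Lemma compact_unit_sphere k : compact ((fun v : 'rV[R]_k => sqnorm v^T) @^-1` [set 1]).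
Proof.
apply: (subclosed_compact _ (rV_compact (fun _ => @segment_compact R (-1) 1))).
  by apply: closed_comp => [v _|]; [exact: continuous_sqnorm | exact: closed_eq].
move=> v /= v_unit i.
have : v^T i 0 ^+ 2 <= 1 by rewrite -v_unit /sqnorm; apply: sumr_ge_term => j; exact: sqr_ge0.
rewrite mxE => v_sq_le1; rewrite /= in_itv /=; change (-1 <= v 0 i <= 1).
by rewrite -ler_norml -(@expr_le1 _ 2) // real_normK ?num_real.
Qed.

Lemma qform_min_sphere k (A : 'M[R]_k.+1) :
  exists2 v : 'cV[R]_k.+1, sqnorm v = 1 & forall x, qform A v * sqnorm x <= qform A x.
Proof.
have sphere_neq0 : (fun v : 'rV[R]_k.+1 => sqnorm v^T) @^-1` [set 1] !=set0.
  by exists (delta_mx 0 0); rewrite /= trmx_delta sqnormE qform_delta mxE eqxx.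
have [c c_unit c_min] := compact_EVT_min sphere_neq0 (@compact_unit_sphere k.+1)
  (continuous_subspaceT (@continuous_qform k.+1 A)).
exists c^T => [|x]; first by move: c_unit; rewrite inE.
have [->|x_neq0] := eqVneq x 0; first by rewrite qformx0 sqnorm0 mulr0.
set r := Num.sqrt (sqnorm x).
have r_gt0 : 0 < r by rewrite sqrtr_gt0 sqnorm_gt0.
have r_sq : r ^+ 2 = sqnorm x by rewrite sqr_sqrtr // sqnorm_ge0.
have unit_x : (r^-1 *: x)^T \in (fun v : 'rV[R]_k.+1 => sqnorm v^T) @^-1` [set 1].
  by rewrite inE /= trmxK sqnormZ -r_sq exprVn mulVf // expf_neq0 // gt_eqF.
have := c_min _ unit_x; rewrite !trmxK qformZ exprVn => min_le.
by rewrite -r_sq -ler_pdivlMr ?exprn_gt0 // mulrC.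
Qed.

Lemma cV0_qform_sqnorm (A : 'M[R]_0) x : qform A x = 0 /\ sqnorm x = 0.
Proof. by rewrite /qform /sqnorm mxE !big_ord0. Qed.

Lemma qform_ge_sqnorm k (A : 'M[R]_k) : exists mu, forall x, mu * sqnorm x <= qform A x.
Proof.
case: k A => [|k] A; last by have [v _ v_min] := qform_min_sphere A; exists (qform A v).
by exists 0 => x; have [-> ->] := cV0_qform_sqnorm A x; rewrite mul0r.
Qed.

Lemma qform_le_sqnorm k (A : 'M[R]_k) :
  exists2 C, 0 <= C & forall x, qform A x <= C * sqnorm x.
Proof.
have [mu mu_le] := qform_ge_sqnorm (- A); exists `|mu| => // x.
have := mu_le x; rewrite qformN lerNr => /le_trans; apply.
by rewrite -mulNr ler_wpM2r ?sqnorm_ge0 // -normrN ler_norm.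
Qed.

Lemma pd_mx_coercive k (A : 'M[R]_k) : pd_mx A ->
  exists2 lam, 0 < lam & forall x, lam * sqnorm x <= qform A x.
Proof.
case: k A => [|k] A pdA.
  by exists 1 => // x; have [-> ->] := cV0_qform_sqnorm A x; rewrite mulr0.
have [v v_unit v_min] := qform_min_sphere A; exists (qform A v) => //.
by apply: pdA; apply: contra_eqN v_unit => /eqP ->; rewrite sqnorm0 eq_sym oner_eq0.
Qed.

Lemma quadratic_ge0_linear_coef0 (b c : R) : 0 <= c ->
  (forall t, 0 <= t * b + t ^+ 2 * c) -> b = 0.
Proof.
move=> c_ge0 nonneg; have [//|b_neq0] := eqVneq b 0.
have c1_gt0 : 0 < c + 1 by rewrite ltr_wpDl.
have := nonneg (- b / (c + 1)).
have -> : - b / (c + 1) * b + (- b / (c + 1)) ^+ 2 * c = - (b ^+ 2 / (c + 1) ^+ 2).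
  by field; rewrite gt_eqF.
have b_sq_gt0 : 0 < b ^+ 2 by rewrite lt_def sqrf_eq0 b_neq0 sqr_ge0.
have : 0 < b ^+ 2 / (c + 1) ^+ 2 by rewrite divr_gt0 // exprn_gt0.
lra.
Qed.

Lemma psd_mx_qform_eq0 k (B : 'M[R]_k) v : sym_mx B -> psd_mx B ->
  qform B v = 0 -> v^T *m B = 0.
Proof.
move=> symB psdB Bv0; have bil_eq0 y : bilform B v y = 0.
  have /eqP : bilform B v y + bilform B y v = 0.
    apply: (quadratic_ge0_linear_coef0 (psdB y)) => t.
    by have := psdB (v + t *: y); rewrite qformDZ Bv0 add0r.
  by rewrite (bilformC _ _ symB) -mulr2n mulrn_eq0 => /eqP.
apply/matrixP => i j.
by rewrite (ord1 i) [RHS]mxE -(bil_eq0 (delta_mx j 0)) /bilform -colE [RHS]mxE.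
Qed.

Lemma lambda_min_qform k (A : 'M[R]_k) x : sym_mx A ->
  lambda_min A * sqnorm x <= qform A x.
Proof.
case: k A x => [|k] A x symA.
  by have [-> ->] := cV0_qform_sqnorm A x; rewrite mulr0.
have [v v_unit v_min] := qform_min_sphere A; set mu := qform A v.
have mu_eigen : eigenvalue A mu.
  have psdB : psd_mx (A - mu%:M) by move=> y; rewrite qformB qform_scalar subr_ge0.
  have symB : sym_mx (A - mu%:M) by rewrite /sym_mx linearB /= tr_scalar_mx symA.
  have /psd_mx_qform_eq0 : qform (A - mu%:M) v = 0.
    by rewrite qformB qform_scalar v_unit mulr1 subrr.
  move=> /(_ symB psdB) /eqP; rewrite mulmxBr subr_eq0 mul_mx_scalar => /eqP vA.
  apply/eigenvalueP; exists v^T => //; apply: contra_eqN v_unit => /eqP v0.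
  by rewrite -[v]trmxK v0 trmx0 sqnorm0 eq_sym oner_eq0.
have mu_le a : eigenvalue A a -> mu <= a.
  move=> /eigenvalueP [u uA u_neq0].
  have uT_neq0 : u^T != 0 by rewrite -trmx0 (inj_eq trmx_inj).
  rewrite -(ler_pM2r (sqnorm_gt0 uT_neq0)); apply: le_trans (v_min u^T) _.
  by rewrite sqnormE /qform trmxK uA mulmx1 -scalemxAl mxE.
have lmin_le : lambda_min A <= mu by apply: ge_inf => //; exists mu => a /mu_le.
by apply: le_trans (v_min x); rewrite ler_wpM2r ?sqnorm_ge0.
Qed.

End QuadraticFormBounds.

Section SectorMatrices.
Variables (R : realType) (n m : nat) (K : 'M[R]_(m, n)).

Lemma trmxN1 : (- 1%:M : 'M[R]_m)^T = - 1%:M.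
Proof. by rewrite linearN /= trmx1. Qed.

Lemma Sigma0E T : Sigma0 K T =
  (row_mx K (- 1%:M))^T *m T *m row_mx 0 1%:M +
  (row_mx 0 1%:M)^T *m T *m row_mx K (- 1%:M).
Proof.
rewrite /Sigma0 !tr_row_mx trmxN1 trmx0 trmx1 !mul_col_mx !mul_mx_row.
rewrite add_col_mx !add_row_mx /block_mx.
by rewrite !(mul0mx, mulmx0, mulNmx, mul1mx, mulmx1, mulmxN, addr0, add0r) mulr2n opprD.
Qed.

Lemma SigmaRE Rm : SigmaR K Rm = (row_mx K (- 1%:M))^T *m Rm *m row_mx K (- 1%:M).
Proof.
rewrite /SigmaR !tr_row_mx trmxN1 !mul_col_mx !mul_mx_row /block_mx.
by rewrite !(mulNmx, mul1mx, mulmxN, mulmx1, opprK).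
Qed.

Lemma qform_Sigma0 T x w :
  qform (Sigma0 K T) (col_mx x w) = bilform T (K *m x - w) w + bilform T w (K *m x - w).
Proof.
by rewrite Sigma0E qformD !qform_mulmx !mul_row_col !(mulNmx, mul1mx, mul0mx, add0r).
Qed.

Lemma qform_SigmaR Rm x w : qform (SigmaR K Rm) (col_mx x w) = qform Rm (K *m x - w).
Proof. by rewrite SigmaRE qform_mulmx mul_row_col mulNmx mul1mx. Qed.

Lemma sym_SigmaR Rm : sym_mx Rm -> sym_mx (SigmaR K Rm).
Proof. by move=> symR; rewrite /sym_mx SigmaRE !trmx_mul trmxK symR mulmxA. Qed.

End SectorMatrices.

Lemma radially_unbounded_of_bounds (R : realType) n (Y L : 'cV[R]_n -> R) (lam b : R) :
  0 < lam -> 0 <= b -> (forall x, 0 <= L x) -> (forall x, L x <= Y x) ->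
  (forall x, lam * sqnorm x - b * L x ^+ 2 <= Y x) -> radially_unbounded Y.
Proof.
move=> lam_gt0 b_ge0 L_ge0 L_le Y_ge M; set N := `|M|.
have N_ge0 : 0 <= N by exact: normr_ge0.
exists (Num.sqrt ((N + b * N ^+ 2) / lam)) => x.
rewrite /enorm ler_sqrt ?sqnorm_ge0 // ler_pdivrMr // => x_large.
apply: le_trans (ler_norm M) _; rewrite -/N.
have [N_le|L_lt] := leP N (L x); first exact: le_trans N_le (L_le x).
apply: le_trans (Y_ge x).
have : b * L x ^+ 2 <= b * N ^+ 2.
  by rewrite ler_wpM2l //; apply: lerXn2r; rewrite ?nnegrE // ltW.
lra.
Qed.

Section SaturatedLyapunov.
Variables (R : realType) (n m : nat) (ub lb : 'I_m -> R).
Variables (K : 'M[R]_(m, n)) (Q : 'M[R]_(n + m)).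
Hypotheses (ub_gt0 : forall i, 0 < ub i) (lb_gt0 : forall i, 0 < lb i).

Local Notation s x := (sat ub lb (K *m x)).
Local Notation w x := (dz ub lb (K *m x)).
Local Notation Y := (Yfun ub lb K Q).
Local Notation sector_gain i := (Num.min (ub i) (lb i)).

Lemma qform_SigmaR_dz Rm x : qform (SigmaR K Rm) (col_mx x (w x)) = qform Rm (s x).
Proof. by rewrite qform_SigmaR subr_dz. Qed.

Lemma qform_Sigma0_dz T x : is_diag_mx T ->
  qform (Sigma0 K T) (col_mx x (w x)) = 2 * \sum_i T i i * (s x i 0 * w x i 0).
Proof.
move=> diagT; rewrite qform_Sigma0 subr_dz !bilform_diag // mulr2n mulrDl mul1r.
by congr (_ + _); apply: eq_bigr => i _; ring.
Qed.

Lemma qform_Sigma0_dz_ge T x : is_diag_mx T -> psd_mx T ->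
  2 * \sum_i T i i * sector_gain i * `|w x i 0| <= qform (Sigma0 K T) (col_mx x (w x)).
Proof.
move=> diagT psdT; rewrite qform_Sigma0_dz // ler_pM2l // ler_sum // => i _.
by rewrite -mulrA ler_wpM2l ?psd_mx_diag_ge0 ?dz_sector.
Qed.

Let sector_term_ge0 T x i : psd_mx T -> 0 <= T i i * sector_gain i * `|w x i 0|.
Proof.
by move=> psdT; rewrite !mulr_ge0 ?psd_mx_diag_ge0 // le_min !ltW.
Qed.

Lemma qform_Sigma0_dz_ge0 T x : is_diag_mx T -> psd_mx T ->
  0 <= qform (Sigma0 K T) (col_mx x (w x)).
Proof.
move=> diagT psdT; apply: le_trans (qform_Sigma0_dz_ge x diagT psdT).
by rewrite mulr_ge0 // sumr_ge0 // => i _; exact: sector_term_ge0.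
Qed.

Lemma qform_Sigma0_dz_gt0 T x : is_diag_mx T -> pd_mx T -> w x != 0 ->
  0 < qform (Sigma0 K T) (col_mx x (w x)).
Proof.
move=> diagT pdT /cV_neq0 [i wi_neq0]; have psdT := pd_mx_psd pdT.
apply: lt_le_trans (qform_Sigma0_dz_ge x diagT psdT).
rewrite mulr_gt0 //; apply: lt_le_trans (sumr_ge_term i _); last first.
  by move=> j; exact: sector_term_ge0.
by rewrite !mulr_gt0 ?pd_mx_diag_gt0 ?normr_gt0 // lt_min ub_gt0 lb_gt0.
Qed.

Lemma sqnorm_dz_le T x : is_diag_mx T -> pd_mx T ->
  sqnorm (w x) <= (\sum_i (2 * (T i i * sector_gain i))^-2) *
                  qform (Sigma0 K T) (col_mx x (w x)) ^+ 2.
Proof.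
move=> diagT pdT; have psdT := pd_mx_psd pdT.
set L := qform _ _; rewrite /sqnorm mulr_suml; apply: ler_sum => i _.
have gain_gt0 : 0 < 2 * (T i i * sector_gain i).
  by rewrite !mulr_gt0 ?pd_mx_diag_gt0 // lt_min ub_gt0 lb_gt0.
have term_le : 2 * (T i i * sector_gain i) * `|w x i 0| <= L.
  apply: le_trans (qform_Sigma0_dz_ge x diagT psdT); rewrite -!mulrA ler_pM2l //.
  by rewrite mulrA; apply: sumr_ge_term => j; exact: sector_term_ge0.
have wi_le : `|w x i 0| <= L / (2 * (T i i * sector_gain i)).
  by rewrite ler_pdivlMr // mulrC.
rewrite -real_normK ?num_real // -exprVn mulrC -exprMn.
by apply: lerXn2r; rewrite ?nnegrE // (le_trans _ wi_le).
Qed.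

Lemma Yfun0 : Y 0 = 0.
Proof. by rewrite /Yfun mulmx0 dz0 // col_mx0 qformx0. Qed.

Lemma Yfun_dz_eq0 x : w x = 0 -> Y x = qform (ulsubmx Q) x.
Proof. by rewrite /Yfun => ->; rewrite qform_col_mx0. Qed.

Lemma Yfun_ge_qform_sat T Rm x : is_diag_mx T -> psd_mx T ->
  psd_mx (Q - Sigma0 K T - SigmaR K Rm) -> qform Rm (s x) <= Y x.
Proof.
move=> diagT psdT /(_ (col_mx x (w x))); rewrite !qformB qform_SigmaR_dz.
have := qform_Sigma0_dz_ge0 x diagT psdT; rewrite /Yfun; lra.
Qed.

Lemma Yfun_pd_SigmaR Rm : pd_mx Rm -> pd_mx (ulsubmx Q) ->
  psd_mx (Q - SigmaR K Rm) -> pd_fun Y.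
Proof.
move=> pdR pdQ11 psdP; split=> [|x x_neq0]; first exact: Yfun0.
have [s0|s_neq0] := eqVneq (s x) 0.
  by rewrite Yfun_dz_eq0 ?(dz_eq0_of_sat_eq0 ub_gt0 lb_gt0 s0) //; exact: pdQ11.
have := psdP (col_mx x (w x)); rewrite qformB qform_SigmaR_dz.
have := pdR _ s_neq0; rewrite /Yfun; lra.
Qed.

Lemma Yfun_pd_Sigma0 T : is_diag_mx T -> pd_mx T -> pd_mx (ulsubmx Q) ->
  psd_mx (Q - Sigma0 K T) -> pd_fun Y.
Proof.
move=> diagT pdT pdQ11 psdP; split=> [|x x_neq0]; first exact: Yfun0.
have [w0|w_neq0] := eqVneq (w x) 0; first by rewrite Yfun_dz_eq0 //; exact: pdQ11.
have := psdP (col_mx x (w x)); rewrite qformB.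
have := qform_Sigma0_dz_gt0 diagT pdT w_neq0; rewrite /Yfun; lra.
Qed.

Lemma Yfun_radially_unbounded T : is_diag_mx T -> pd_mx T -> pd_mx (ulsubmx Q) ->
  psd_mx (Q - Sigma0 K T) -> radially_unbounded Y.
Proof.
move=> diagT pdT pdQ11 psdP.
have [lam lam_gt0 lam_le] := pd_mx_coercive pdQ11.
have [C C_ge0 C_le] := qform_le_sqnorm (Q - Sigma0 K T).
set D := \sum_i (2 * (T i i * sector_gain i))^-2.
have D_ge0 : 0 <= D by apply: sumr_ge0 => i _; rewrite invr_ge0 sqr_ge0.
pose L x := qform (Sigma0 K T) (col_mx x (w x)).
have L_ge0 x : 0 <= L x by exact: qform_Sigma0_dz_ge0 (pd_mx_psd pdT).
have Y_split x : Y x = qform (Q - Sigma0 K T) (col_mx x (w x)) + L x.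
  by rewrite qformB subrK.
apply: (@radially_unbounded_of_bounds _ _ _ L (lam / 2) (C * D)) => //.
- by rewrite divr_gt0.
- by rewrite mulr_ge0.
- by move=> x; rewrite Y_split lerDr psdP.
move=> x; rewrite Y_split.
have x_part : qform (Q - Sigma0 K T) (col_mx x 0) = qform (ulsubmx Q) x.
  by rewrite qformB qform_col_mx0 qform_Sigma0 /bilform trmx0 !(mulmx0, mul0mx) !mxE addr0 subr0.
have z_split : col_mx x 0 = col_mx x (w x) - col_mx 0 (w x).
  by rewrite opp_col_mx add_col_mx subrr oppr0 addr0.
have := psd_qformB_le (col_mx x (w x)) (col_mx 0 (w x)) psdP.
rewrite -z_split x_part.
have := C_le (col_mx 0 (w x)); rewrite sqnorm_col_mx sqnorm0 add0r.
have := lam_le x; have := L_ge0 x.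
have : C * sqnorm (w x) <= C * (D * L x ^+ 2).
  by rewrite ler_wpM2l // sqnorm_dz_le.
lra.
Qed.

End SaturatedLyapunov.

Lemma SigmaR_certificate_not_radially_unbounded (R : realType) :
  exists (n m : nat) (ub lb : 'I_m -> R) (K : 'M[R]_(m, n))
         (Q : 'M[R]_(n + m)) (Rm : 'M[R]_m),
    (forall i, 0 < ub i) /\ (forall i, 0 < lb i) /\ sym_mx Q /\
    sym_mx Rm /\ pd_mx Rm /\ pd_mx (ulsubmx Q) /\
    psd_mx (Q - SigmaR K Rm) /\ ~ radially_unbounded (Yfun ub lb K Q).
Proof.
pose one := fun _ : 'I_1 => (1 : R).
have one_gt0 i : 0 < one i by exact: ltr01.
have sym1 : sym_mx (1%:M : 'M[R]_1) by rewrite /sym_mx trmx1.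
exists 1%N, 1%N, one, one, 1%:M, (SigmaR 1%:M 1%:M), 1%:M.
split; first exact: one_gt0.
split; first exact: one_gt0.
split; first exact: sym_SigmaR.
split; first exact: sym1.
split; first exact: pd_mx1.
split; first by rewrite /SigmaR block_mxKul trmx1 !mulmx1; exact: pd_mx1.
split=> [x|/(_ 2) [r r_large]]; first by rewrite subrr qform0x.
have := r_large (const_mx `|r|).
rewrite /enorm /sqnorm big_ord1 mxE sqrtr_sqr normr_id => /(_ (ler_norm r)).
rewrite /Yfun qform_SigmaR_dz -sqnormE /sqnorm big_ord1 /sat mxE.
set u := Num.min _ _; have u_le1 : u <= 1 by rewrite ge_min lexx.
have u_ge_N1 : -1 <= u by rewrite le_min le_max /one lexx orTb andbT; lra.
nra.
Qed.

Theorem theorem1 (R : realType) (n m : nat) (ub lb : 'I_m -> R)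
  (K : 'M[R]_(m, n)) (Q : 'M[R]_(n + m)) :
  (forall i, 0 < ub i) -> (forall i, 0 < lb i) ->
  sym_mx Q ->
  let Y := Yfun ub lb K Q in
  (* (i) *)
  ((exists (T0 Rm : 'M[R]_m),
      is_diag_mx T0 /\ psd_mx T0 /\ sym_mx Rm /\ psd_mx Rm /\
      psd_mx (Q - Sigma0 K T0 - SigmaR K Rm)) ->
    psd_fun Y) /\
  (* (ii) *)
  (forall (T0 Rm : 'M[R]_m),
      is_diag_mx T0 -> psd_mx T0 -> sym_mx Rm -> pd_mx Rm ->
      psd_mx (Q - Sigma0 K T0 - SigmaR K Rm) ->
    psd_fun Y /\
    forall x, lambda_min Rm * sqnorm (sat ub lb (K *m x)) <= Y x) /\
  (* (iii) *)
  ((exists Rm : 'M[R]_m,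
      sym_mx Rm /\ pd_mx Rm /\ pd_mx (ulsubmx Q) /\ psd_mx (Q - SigmaR K Rm)) ->
    pd_fun Y) /\
  (* (iv) *)
  ((exists T0 : 'M[R]_m,
      is_diag_mx T0 /\ pd_mx T0 /\ pd_mx (ulsubmx Q) /\ psd_mx (Q - Sigma0 K T0)) ->
    pd_fun Y /\ radially_unbounded Y) /\
  (* (iii), "not necessarily radially unbounded": some instance satisfying the
     hypotheses of (iii) has a Y that is not radially unbounded *)
  (exists (n' m' : nat) (ub' lb' : 'I_m' -> R) (K' : 'M[R]_(m', n'))
          (Q' : 'M[R]_(n' + m')) (Rm' : 'M[R]_m'),
      (forall i, 0 < ub' i) /\ (forall i, 0 < lb' i) /\ sym_mx Q' /\
      sym_mx Rm' /\ pd_mx Rm' /\ pd_mx (ulsubmx Q') /\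
      psd_mx (Q' - SigmaR K' Rm') /\
      ~ radially_unbounded (Yfun ub' lb' K' Q')).
Proof.
move=> ub_gt0 lb_gt0 _ Y; rewrite /Y.
have Y_ge := Yfun_ge_qform_sat (K := K) (Q := Q) ub_gt0 lb_gt0.
split=> [[T0 [Rm [diagT [psdT [_ [psdR psdP]]]]]] x|].
  exact: le_trans (psdR _) (Y_ge _ _ x diagT psdT psdP).
split=> [T0 Rm diagT psdT symR pdR psdP|].
  have psdR := pd_mx_psd pdR.
  split=> x; last exact: le_trans (lambda_min_qform _ symR) (Y_ge _ _ x diagT psdT psdP).
  exact: le_trans (psdR _) (Y_ge _ _ x diagT psdT psdP).
split=> [[Rm [_ [pdR [pdQ11 psdP]]]]|].
  exact: (Yfun_pd_SigmaR ub_gt0 lb_gt0 pdR pdQ11 psdP).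
split=> [[T0 [diagT [pdT [pdQ11 psdP]]]]|].
  split; first exact: (Yfun_pd_Sigma0 ub_gt0 lb_gt0 diagT pdT pdQ11 psdP).
  exact: (Yfun_radially_unbounded ub_gt0 lb_gt0 diagT pdT pdQ11 psdP).
exact: SigmaR_certificate_not_radially_unbounded.
Qed.
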